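(* Let $q$ be a power of a prime $p$, $M,N$ positive integers coprime to $p$, $\lambda_1,\lambda_2\in\mathbb{F}_q^{\ast}$, and let $\mathbb{F}_{q^m}$ be an extension field containing $\gamma,\beta$ with $\gamma^M=\lambda_1$, $\beta^N=\lambda_2$, a primitive $M$-th root of unity $\zeta_1$ and a primitive $N$-th root of unity $\zeta_2$. Let $\Omega=\{(i,j):0\le i\le M-1,\ 0\le j\le N-1\}$. Let $\mathcal{C}$ be a 2-D $(\lambda_1,\lambda_2)$-constacyclic code of area $M\times N$ over $\mathbb{F}_q$ with minimum distance $d$ and common zero set $V_c$. Let $\widetilde{\mathbb{E}}=\{(\theta,\phi)\in\Omega:(\gamma\zeta_1^{\theta},\beta\zeta_2^{\phi})\in V_c\}$ and write $\Omega\setminus\widetilde{\mathbb{E}}=\{(\theta_1,\phi_1),\dots,(\theta_{s'},\phi_{s'})\}$, $s'=MN-|V_c|$. Let $c\in\mathcal{C}$, and let $e$ be an $M\times N$ array over $\mathbb{F}_q$ whose set of nonzero positions $\mathbb{E}$ satisfies $1\le t:=|\mathbb{E}|\le\lfloor(d-1)/2\rfloor$; write $\Omega\setminus\mathbb{E}=\{(i_1,j_1),\dots,(i_{t'},j_{t'})\}$. Let $r=c+e$, let $R=(R_{\theta,\phi})$ with $R_{\theta,\phi}=\sum_{i,j}r_{i,j}(\gamma\zeta_1^{\theta})^i(\beta\zeta_2^{\phi})^j$, and $R(x,y)=\sum_{(\theta,\phi)\in\Omega}R_{\theta,\phi}x^{\theta}y^{\phi}$. Then the linear system $AX=B$ in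 the unknowns $X=(X_1,\dots,X_{s'})^T$, where $A$ is the $t'\times s'$ matrix with entries $A_{l,k}=\zeta_1^{-i_l\theta_k}\zeta_2^{-j_l\phi_k}$ and $B=(R(\zeta_1^{-i_1},\zeta_2^{-j_1}),\dots,R(\zeta_1^{-i_{t'}},\zeta_2^{-j_{t'}}))^T$, has a unique solution (namely $X_k=C_{\theta_k,\phi_k}$, the entries of the spectrum of $c$ outside the spectral nulls).
   Context: An $M\times N$ array $c=(c_{i,j})$ over $\mathbb{F}_q$ is identified with $c(x,y)=\sum_{i,j}c_{i,j}x^iy^j$; its spectrum is $C_{\theta,\phi}=\sum_{i,j}c_{i,j}(\gamma\zeta_1^{\theta})^i(\beta\zeta_2^{\phi})^j$. A 2-D $(\lambda_1,\lambda_2)$-constacyclic code of area $M\times N$ over $\mathbb{F}_q$ is an $\mathbb{F}_q$-linear subspace of $M\times N$ arrays closed under the column $\lambda_1$-constacyclic shift (row $0$ becomes $\lambda_1$ times row $M-1$, row $i$ becomes row $i-1$) and the row $\lambda_2$-constacyclic shift (column $0$ becomes $\lambda_2$ times column $N-1$, column $j$ becomes column $j-1$); equivalently an ideal of $\mathbb{F}_q[x,y]/\langle x^M-\lambda_1,y^N-\lambda_2\rangle$. Let $V_\circ=\{(a,b): a^M=\lambda_1,\ b^N=\lambda_2\}$ and $V_1$ the set of common roots of all $c(x,y)$, $c\in\mathcal{C}$; the common zero set is $V_c=V_\circ\cap V_1$. The minimum distance is the least Hamming weight of a nonzero codeword. *)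

From HB Require Import structures.
From mathcomp Require Import all_boot all_order all_algebra all_field.
Set Implicit Arguments. Unset Strict Implicit. Unset Printing Implicit Defensive.
Import GRing.Theory.
Local Open Scope ring_scope.

Section Defs.
Variables (F : finFieldType) (M N : nat).

(* column lambda-constacyclic shift: row 0 <- l * row (M-1), row i <- row (i-1) *)
Definition col_cshift (l : F) (c : 'M[F]_(M, N)) : 'M[F]_(M, N) :=
  \matrix_(i, j) ((if (i : nat) == 0%N then l else 1) * c (ord_pred i) j).

(* row lambda-constacyclic shift: col 0 <- l * col (N-1), col j <- col (j-1) *)
Definition row_cshift (l : F) (c : 'M[F]_(M, N)) : 'M[F]_(M, N) :=
  \matrix_(i, j) ((if (j : nat) == 0%N then l else 1) * c i (ord_pred j)).

Definition is_2D_constacyclic (l1 l2 : F) (C : {set 'M[F]_(M, N)}) : Prop :=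
  [/\ 0 \in C,
      (forall (a : F) x y, x \in C -> y \in C -> a *: x + y \in C),
      (forall c, c \in C -> col_cshift l1 c \in C) &
      (forall c, c \in C -> row_cshift l2 c \in C)].

Definition supp (c : 'M[F]_(M, N)) : {set 'I_M * 'I_N} :=
  [set ij : 'I_M * 'I_N | c ij.1 ij.2 != 0].

Definition wt (c : 'M[F]_(M, N)) : nat := #|supp c|.

Definition is_min_dist (C : {set 'M[F]_(M, N)}) (d : nat) : Prop :=
  (exists2 c, c \in C & (c != 0) && (wt c == d)) /\
  (forall c, c \in C -> c != 0 -> (d <= wt c)%N).

Variable L : fieldExtType F.

Definition eval2 (c : 'M[F]_(M, N)) (a b : L) : L :=
  \sum_(i < M) \sum_(j < N) (c i j)%:A * a ^+ i * b ^+ j.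

Definition Vc (l1 l2 : F) (C : {set 'M[F]_(M, N)}) (ab : L * L) : bool :=
  [&& ab.1 ^+ M == l1%:A, ab.2 ^+ N == l2%:A &
      [forall c in C, eval2 c ab.1 ab.2 == 0]].

Definition Etilde (l1 l2 : F) (C : {set 'M[F]_(M, N)}) (gam bet z1 z2 : L)
  : {set 'I_M * 'I_N} :=
  [set tp : 'I_M * 'I_N | Vc l1 l2 C (gam * z1 ^+ tp.1, bet * z2 ^+ tp.2)].

End Defs.

From HB Require Import structures.
From mathcomp Require Import all_boot all_order all_algebra all_field.
From mathcomp Require Import ring zify.
Set Implicit Arguments. Unset Strict Implicit. Unset Printing Implicit Defensive.
Import GRing.Theory.
Local Open Scope ring_scope.

(* The spectrum C_(th,ph) = c(gam z1^th, bet z2^ph) is a two-dimensional DFT of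
   c twisted by (gam, bet), hence invertible, and row l of the system A X = B is,
   up to a nonzero factor, the inverse transform at the error-free position
   (i_l, j_l) of the array whose spectrum is X on Omega \ E~ and 0 on E~.  As e
   vanishes off E, the spectrum of c solves the system.  The difference of two
   solutions gives an array u vanishing off E whose spectrum vanishes on E~.
   Such an array lies in the F_(q^m)-span of C: for each spectral non-null
   (th0, ph0) some c0 in C has C0_(th0,ph0) != 0; shifting c0 a times along
   columns and b times along rows multiplies its spectrum at (x, y) by x^a y^b,
   so by orthogonality of characters the combination of these shifts with
   coefficients x0^-a y0^-b has its spectrum concentrated at (th0, ph0).
   Extending scalars does not lower the minimum distance of an F_q-linear code
   (kernels commute with field extension), and |E| < d, so u = 0. *)

Lemma prim_root_neq0 (R : idomainType) n (z : R) : n.-primitive_root z -> z != 0.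
Proof. by move=> z_prim; rewrite (prim_root_eq0 z_prim) -lt0n (prim_order_gt0 z_prim). Qed.

Lemma prim_root_mul_expr (R : comNzRingType) n (g z : R) k :
  n.-primitive_root z -> (g * z ^+ k) ^+ n = g ^+ n.
Proof. by move=> z_prim; rewrite exprMn exprAC (prim_expr_order z_prim) expr1n mulr1. Qed.

Lemma prim_root_orthogonal (L : fieldType) n (z : L) (a b : 'I_n) :
  n.-primitive_root z -> \sum_(k < n) (z ^+ a / z ^+ b) ^+ k = (a == b)%:R * n%:R.
Proof.
move=> z_prim; have zb_neq0 : z ^+ b != 0 by rewrite expf_neq0 ?(prim_root_neq0 z_prim).
have [->|neq_ab] := eqVneq a b.
  rewrite divff // (eq_bigr (fun=> 1)) => [|k _]; last exact: expr1n.
  by rewrite sumr_const card_ord mul1r.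
set q := _ / _; have q_neq1 : q != 1.
  apply: contra neq_ab => /eqP/(congr1 ( *%R^~ (z ^+ b))); rewrite divfK // mul1r.
  by move/eqP; rewrite (eq_prim_root_expr z_prim) !modn_small // => /eqP/val_inj->.
have qn : q ^+ n = 1.
  by rewrite /q expr_div_n -!exprM !(mulnC _ n) !exprM (prim_expr_order z_prim) !expr1n divr1.
have := subrX1 q n; rewrite qn subrr => /esym/eqP.
by rewrite mulf_eq0 subr_eq0 (negPf q_neq1) mul0r => /eqP.
Qed.

Lemma alg_expr_neq0 (F : fieldType) (L : falgType F) (x : L) n (l : F) :
  (0 < n)%N -> l != 0 -> x ^+ n = l%:A -> x != 0.
Proof.
move=> n_gt0 l_neq0 xn; apply: contraNneq l_neq0 => x0.
by move: xn; rewrite x0 expr0n gtn_eqF // => /esym/eqP; rewrite scaler_eq0 oner_eq0 orbF.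
Qed.

Lemma mulmx_trmxE (R : comPzRingType) m n p q (A : 'M[R]_(m, p)) (w : 'M[R]_(p, q))
    (B : 'M[R]_(n, q)) i j :
  (A *m w *m B^T) i j = \sum_k \sum_l A i k * w k l * B j l.
Proof.
rewrite mxE [RHS]exchange_big /=.
by apply: eq_bigr => l _; rewrite !mxE mulr_suml.
Qed.

Section DFT1.
Variables (L : fieldType) (n : nat) (g z : L).
Hypotheses (z_prim : n.-primitive_root z) (g_neq0 : g != 0).

Definition dft_mx : 'M[L]_n := \matrix_(th, i) (g * z ^+ th) ^+ i.
Definition idft_mx : 'M[L]_n := \matrix_(i, th) ((n%:R * g ^+ i)^-1 * z ^- (i * th)).

Lemma idft_dft_mx : idft_mx *m dft_mx = 1%:M.
Proof.
apply/matrixP => i i'; rewrite !mxE.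
have termE th : idft_mx i th * dft_mx th i' =
    (n%:R * g ^+ i)^-1 * g ^+ i' * (z ^+ i' / z ^+ i) ^+ th.
  by rewrite !mxE exprMn expr_div_n -!exprM (mulnC th i'); ring.
rewrite (eq_bigr _ (fun th _ => termE th)) -mulr_sumr prim_root_orthogonal //.
have [<-|_] := eqVneq i i'; last by rewrite mul0r mulr0.
rewrite mul1r mulrAC -mulrA mulVf ?mulfV //.
by rewrite mulf_neq0 ?expf_neq0 ?(prim_root_natf_neq0 z_prim).
Qed.

Lemma dft_idft_mx : dft_mx *m idft_mx = 1%:M.
Proof. exact: mulmx1C idft_dft_mx. Qed.

End DFT1.

Section Scatter.
Variables (L : fieldType) (M N s : nat) (en : 'I_s -> 'I_M * 'I_N).

Definition scatter (X : 'cV[L]_s) : 'M[L]_(M, N) :=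
  \matrix_(th, ph) \sum_k ((en k == (th, ph))%:R * X k 0).

Lemma sum_scatter X (f : 'I_M -> 'I_N -> L) :
  \sum_th \sum_ph scatter X th ph * f th ph = \sum_k X k 0 * f (en k).1 (en k).2.
Proof.
rewrite pair_big /=.
under eq_bigr do rewrite mxE -surjective_pairing mulr_suml.
rewrite exchange_big /=; apply: eq_bigr => k _.
rewrite (bigD1 (en k)) //= eqxx mul1r big1 ?addr0 // => p /negPf p_neq.
by rewrite eq_sym p_neq !mul0r.
Qed.

Lemma scatter_en X k : injective en -> scatter X (en k).1 (en k).2 = X k 0.
Proof.
move=> en_inj; rewrite mxE -surjective_pairing (bigD1 k) //= eqxx mul1r.
by rewrite big1 ?addr0 // => k' /negPf k'_neq; rewrite (inj_eq en_inj) k'_neq mul0r.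
Qed.

Lemma scatter_notin X th ph : (forall k, en k != (th, ph)) -> scatter X th ph = 0.
Proof. by move=> not_en; rewrite mxE big1 // => k _; rewrite (negPf (not_en k)) mul0r. Qed.

Lemma scatter_col_en (W : 'M[L]_(M, N)) : injective en ->
    (forall th ph, (forall k, en k != (th, ph)) -> W th ph = 0) ->
  scatter (\col_k W (en k).1 (en k).2) = W.
Proof.
move=> en_inj W0; apply/matrixP => th ph.
have [k /eqP enk|no_k] := pickP (fun k => en k == (th, ph)).
  by rewrite -[th]/((th, ph).1) -[ph]/((th, ph).2) -enk scatter_en // mxE.
by rewrite scatter_notin ?W0 // => k; rewrite no_k.
Qed.

End Scatter.

Section DFT2.
Variables (L : fieldType) (M N : nat) (g1 g2 z1 z2 : L).

Definition dft2 (w : 'M[L]_(M, N)) : 'M[L]_(M, N) :=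
  dft_mx M g1 z1 *m w *m (dft_mx N g2 z2)^T.
Definition idft2 (W : 'M[L]_(M, N)) : 'M[L]_(M, N) :=
  idft_mx M g1 z1 *m W *m (idft_mx N g2 z2)^T.

Fact dft2_is_linear : linear dft2.
Proof. by move=> a u v; rewrite /dft2 mulmxDr mulmxDl -scalemxAr -scalemxAl. Qed.
HB.instance Definition _ := GRing.isLinear.Build L _ _ _ dft2 dft2_is_linear.

Fact idft2_is_linear : linear idft2.
Proof. by move=> a u v; rewrite /idft2 mulmxDr mulmxDl -scalemxAr -scalemxAl. Qed.
HB.instance Definition _ := GRing.isLinear.Build L _ _ _ idft2 idft2_is_linear.

Lemma dft2E w th ph :
  dft2 w th ph = \sum_i \sum_j w i j * (g1 * z1 ^+ th) ^+ i * (g2 * z2 ^+ ph) ^+ j.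
Proof.
rewrite mulmx_trmxE; apply: eq_bigr => i _; apply: eq_bigr => j _.
by rewrite !mxE [_ * w i j]mulrC.
Qed.

Hypotheses (z1_prim : M.-primitive_root z1) (z2_prim : N.-primitive_root z2).
Hypotheses (g1_neq0 : g1 != 0) (g2_neq0 : g2 != 0).

Lemma dft2K : cancel dft2 idft2.
Proof.
move=> w; rewrite /dft2 /idft2 !mulmxA idft_dft_mx // mul1mx -mulmxA -trmx_mul.
by rewrite idft_dft_mx // trmx1 mulmx1.
Qed.

Lemma idft2K : cancel idft2 dft2.
Proof.
move=> W; rewrite /dft2 /idft2 !mulmxA dft_idft_mx // mul1mx -mulmxA -trmx_mul.
by rewrite dft_idft_mx // trmx1 mulmx1.
Qed.

Lemma sum_idft2 (W : 'M[L]_(M, N)) (i : 'I_M) (j : 'I_N) :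
  \sum_(th < M) \sum_(ph < N) W th ph * (z1 ^- i) ^+ th * (z2 ^- j) ^+ ph =
  (M%:R * g1 ^+ i) * (N%:R * g2 ^+ j) * idft2 W i j.
Proof.
have M_neq0 := prim_root_natf_neq0 (R := L) z1_prim.
have N_neq0 := prim_root_natf_neq0 (R := L) z2_prim.
rewrite mulmx_trmxE mulr_sumr; apply: eq_bigr => th _.
rewrite mulr_sumr; apply: eq_bigr => ph _.
rewrite !mxE !exprVn -!exprM; field.
by rewrite M_neq0 N_neq0 !expf_neq0 ?(prim_root_neq0 z1_prim) ?(prim_root_neq0 z2_prim).
Qed.

Lemma dft2_inversion (w : 'M[L]_(M, N)) (i : 'I_M) (j : 'I_N) :
  \sum_(th < M) \sum_(ph < N) dft2 w th ph * (z1 ^- i) ^+ th * (z2 ^- j) ^+ ph =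
  (M%:R * g1 ^+ i) * (N%:R * g2 ^+ j) * w i j.
Proof. by rewrite sum_idft2 dft2K. Qed.

Variables (s t : nat) (en : 'I_s -> 'I_M * 'I_N) (ep : 'I_t -> 'I_M * 'I_N).

Definition idft2_submx : 'M[L]_(t, s) :=
  \matrix_(l, k) (z1 ^- ((ep l).1 * (en k).1) * z2 ^- ((ep l).2 * (en k).2)).

Lemma idft2_submx_mulE X l :
  (idft2_submx *m X) l 0 = (M%:R * g1 ^+ (ep l).1) * (N%:R * g2 ^+ (ep l).2) *
                           idft2 (scatter en X) (ep l).1 (ep l).2.
Proof.
rewrite -sum_idft2.
under [RHS]eq_bigr => th _ do under eq_bigr => ph _ do rewrite -mulrA.
rewrite sum_scatter mxE; apply: eq_bigr => k _.
by rewrite mxE !exprVn -!exprM mulrC.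
Qed.

End DFT2.

Lemma eval2_dft2 (F : finFieldType) (L : fieldExtType F) M N (c : 'M[F]_(M, N))
    (g1 g2 z1 z2 : L) (th : 'I_M) (ph : 'I_N) :
  eval2 c (g1 * z1 ^+ th) (g2 * z2 ^+ ph) = dft2 g1 g2 z1 z2 (map_mx (in_alg L) c) th ph.
Proof. by rewrite dft2E; apply: eq_bigr => i _; apply: eq_bigr => j _; rewrite mxE. Qed.

Section Shifts.
Variables (F : finFieldType) (L : fieldExtType F) (M N : nat).

Lemma alg_mul (a b : F) : (a * b)%:A = a%:A * b%:A :> L.
Proof. by rewrite mulr_algl scalerA. Qed.

Lemma eval2_col_cshift l (c : 'M[F]_(M, N)) (x y : L) :
  x ^+ M = l%:A -> eval2 (col_cshift l c) x y = x * eval2 c x y.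
Proof.
move=> xM; rewrite /eval2 mulr_sumr (reindex_inj (@ordS_inj M)) /=.
apply: eq_bigr => i _; rewrite mulr_sumr; apply: eq_bigr => j _.
rewrite mxE ordSK /=; have [i_lt|] := ltnP i.+1 M.
  by rewrite modn_small // mul1r exprS; ring.
rewrite leq_eqVlt ltnNge ltn_ord orbF => /eqP Mi.
have xi : x ^+ i.+1 = l%:A by rewrite -xM; congr (x ^+ _).
by rewrite -Mi modnn /= alg_mul -xi expr0 exprS; ring.
Qed.

Lemma eval2_row_cshift l (c : 'M[F]_(M, N)) (x y : L) :
  y ^+ N = l%:A -> eval2 (row_cshift l c) x y = y * eval2 c x y.
Proof.
move=> yN; rewrite /eval2 mulr_sumr; apply: eq_bigr => i _.
rewrite mulr_sumr (reindex_inj (@ordS_inj N)) /=; apply: eq_bigr => j _.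
rewrite mxE ordSK /=; have [j_lt|] := ltnP j.+1 N.
  by rewrite modn_small // mul1r exprS; ring.
rewrite leq_eqVlt ltnNge ltn_ord orbF => /eqP Nj.
have yj : y ^+ j.+1 = l%:A by rewrite -yN; congr (y ^+ _).
by rewrite -Nj modnn /= alg_mul -yj expr0 exprS; ring.
Qed.

Definition cshift2 (l1 l2 : F) (a b : nat) (c : 'M[F]_(M, N)) : 'M[F]_(M, N) :=
  iter a (col_cshift l1) (iter b (row_cshift l2) c).

Lemma eval2_cshift2 l1 l2 c (x y : L) a b :
  x ^+ M = l1%:A -> y ^+ N = l2%:A ->
  eval2 (cshift2 l1 l2 a b c) x y = x ^+ a * y ^+ b * eval2 c x y.
Proof.
move=> xM yN; elim: a => [|a IHa] /=.
  elim: b => [|b IHb] /=; first by rewrite !expr0 !mul1r.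
  by rewrite eval2_row_cshift // IHb exprS expr0 !mul1r mulrA.
by rewrite eval2_col_cshift // IHa exprS !mulrA.
Qed.

Lemma cshift2_in l1 l2 (C : {set 'M[F]_(M, N)}) c a b :
  (forall c, c \in C -> col_cshift l1 c \in C) ->
  (forall c, c \in C -> row_cshift l2 c \in C) ->
  c \in C -> cshift2 l1 l2 a b c \in C.
Proof.
move=> C_col C_row cC; elim: a => [|a IHa] /=; last exact: C_col.
by elim: b => [|b IHb] //=; apply: C_row.
Qed.

End Shifts.

Section OffSupport.
Variables (R : pzSemiRingType) (M N : nat) (S : {set 'I_M * 'I_N}).

Definition offsupp_mx : 'M[R]_(M * N) :=
  diag_mx (mxvec (\matrix_(i, j) ((i, j) \notin S)%:R)).

Lemma mxvec_offsupp_eq0 (w : 'M[R]_(M, N)) :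
  mxvec w *m offsupp_mx = 0 <-> forall i j, (i, j) \notin S -> w i j = 0.
Proof.
rewrite /offsupp_mx mul_mx_diag; split=> [w0 i j ijS | w0].
  have := congr1 (fun A : 'M_(1, _) => A 0 (mxvec_index i j)) w0.
  by rewrite /= !mxE !mxvecE mxE ijS mulr1.
apply/rowP => k; rewrite !mxE; case/mxvec_indexP: k => i j.
rewrite !mxvecE mxE; have [ijS|] := boolP ((i, j) \notin S).
  by rewrite w0 // mul0r.
by rewrite mulr0.
Qed.

End OffSupport.

Lemma map_offsupp_mx (R R' : pzSemiRingType) (f : {rmorphism R -> R'}) M N
    (S : {set 'I_M * 'I_N}) :
  map_mx f (offsupp_mx R S) = offsupp_mx R' S.
Proof.
rewrite map_diag_mx map_mxvec; congr (diag_mx (mxvec _)).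
by apply/matrixP => i j; rewrite !mxE rmorph_nat.
Qed.

Section LinearCode.
Variables (F : finFieldType) (M N : nat) (C : {set 'M[F]_(M, N)}).
Hypotheses (C0 : 0 \in C) (C_lin : forall (a : F) x y, x \in C -> y \in C -> a *: x + y \in C).

Lemma code_lin_comb (I : finType) (a : I -> F) (f : I -> 'M[F]_(M, N)) :
  (forall i, f i \in C) -> \sum_i a i *: f i \in C.
Proof.
move=> fC; apply: (big_ind (fun x => x \in C)) => // [x y xC yC|i _].
  by rewrite -[x]scale1r C_lin.
by rewrite -[_ *: _]addr0 C_lin.
Qed.

Definition code_mx : 'M[F]_(#|C|, M * N) := \matrix_(k < #|C|) mxvec (enum_val k).

Lemma mulmx_code_mx (b : 'rV[F]_#|C|) : exists2 c, c \in C & b *m code_mx = mxvec c.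
Proof.
exists (\sum_k b 0 k *: enum_val k); first by apply: code_lin_comb => k; apply: enum_valP.
rewrite mulmx_sum_row linear_sum; apply: eq_bigr => k _.
by rewrite linearZ /= rowK.
Qed.

Lemma kermx_code_offsupp d (S : {set 'I_M * 'I_N}) :
  (forall c, c \in C -> c != 0 -> (d <= wt c)%N) -> (#|S| < d)%N ->
  (kermx (code_mx *m offsupp_mx F S) <= kermx code_mx)%MS.
Proof.
move=> C_min S_lt_d; apply/sub_kermxP/row_matrixP => k.
rewrite row0 row_mul; set b := row k _; have b_ker : b *m code_mx *m offsupp_mx F S = 0.
  by rewrite -mulmxA -row_mul mulmx_ker row0.
have [c cC bc] := mulmx_code_mx b.
move: b_ker; rewrite bc => /mxvec_offsupp_eq0 c_offS.
suff -> : c = 0 by rewrite linear0.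
apply/eqP; apply: contraTT S_lt_d => c_neq0; rewrite -leqNgt.
apply: leq_trans (C_min c cC c_neq0) (subset_leq_card _).
by apply/subsetP => -[i j]; rewrite inE /=; apply: contraR => /c_offS ->; rewrite eqxx.
Qed.

Variable L : fieldExtType F.

Definition lspan (w : 'M[L]_(M, N)) : bool :=
  (mxvec w <= map_mx (in_alg L) code_mx)%MS.

Lemma lspan_code c : c \in C -> lspan (map_mx (in_alg L) c).
Proof.
move=> cC; rewrite /lspan -map_mxvec.
have -> : mxvec c = row (enum_rank_in cC c) code_mx by rewrite rowK enum_rankK_in.
by rewrite map_row row_sub.
Qed.

Lemma lspan_sum (I : finType) (w : I -> 'M[L]_(M, N)) :
  (forall i, lspan (w i)) -> lspan (\sum_i w i).
Proof. by move=> w_span; rewrite /lspan linear_sum; apply: summx_sub => i _; apply: w_span. Qed.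

Lemma lspanZ a w : lspan w -> lspan (a *: w).
Proof. by rewrite /lspan linearZ; apply: scalemx_sub. Qed.

Lemma lspan_supp_eq0 d (S : {set 'I_M * 'I_N}) (w : 'M[L]_(M, N)) :
  (forall c, c \in C -> c != 0 -> (d <= wt c)%N) -> (#|S| < d)%N ->
  lspan w -> (forall i j, (i, j) \notin S -> w i j = 0) -> w = 0.
Proof.
move=> C_min S_lt_d /submxP[a wa] /mxvec_offsupp_eq0 w_offS.
have a_ker : (a <= kermx (map_mx (in_alg L) (code_mx *m offsupp_mx F S)))%MS.
  by apply/sub_kermxP; rewrite map_mxM map_offsupp_mx mulmxA -wa.
have /sub_kermxP : (a <= kermx (map_mx (in_alg L) code_mx))%MS.
  rewrite -!map_kermx in a_ker *; apply: submx_trans a_ker _.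
  by rewrite map_submx (kermx_code_offsupp C_min S_lt_d).
by rewrite -wa => /eqP; rewrite mxvec_eq0 => /eqP.
Qed.

End LinearCode.

Section CodeSpectrum.
Variables (F : finFieldType) (L : fieldExtType F) (M N : nat).
Variables (l1 l2 : F) (C : {set 'M[F]_(M, N)}) (g1 g2 z1 z2 : L).
Hypotheses (C_col : forall c, c \in C -> col_cshift l1 c \in C).
Hypotheses (C_row : forall c, c \in C -> row_cshift l2 c \in C).
Hypotheses (z1_prim : M.-primitive_root z1) (z2_prim : N.-primitive_root z2).
Hypotheses (g1_neq0 : g1 != 0) (g2_neq0 : g2 != 0).
Hypotheses (g1M : g1 ^+ M = l1%:A) (g2N : g2 ^+ N = l2%:A).

Local Notation dft2 := (@dft2 L M N g1 g2 z1 z2).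
Local Notation idft2 := (@idft2 L M N g1 g2 z1 z2).
Local Notation liftL c := (map_mx (in_alg L) c).

Lemma dft2_cshift2 c a b th ph :
  dft2 (liftL (cshift2 l1 l2 a b c)) th ph =
  (g1 * z1 ^+ th) ^+ a * (g2 * z2 ^+ ph) ^+ b * dft2 (liftL c) th ph.
Proof. by rewrite -!eval2_dft2 eval2_cshift2 // prim_root_mul_expr. Qed.

Lemma lspan_idft2_delta c th0 ph0 :
  c \in C -> dft2 (liftL c) th0 ph0 != 0 -> lspan C (idft2 (delta_mx th0 ph0)).
Proof.
move=> cC; set v := dft2 _ th0 ph0 => v_neq0.
set x0 := g1 * z1 ^+ th0; set y0 := g2 * z2 ^+ ph0.
pose h := \sum_(ab : 'I_M * 'I_N)
  ((x0 ^+ ab.1)^-1 * (y0 ^+ ab.2)^-1) *: liftL (cshift2 l1 l2 ab.1 ab.2 c).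
have h_span : lspan C h.
  by apply: lspan_sum => ab; apply/lspanZ/lspan_code/cshift2_in.
have dft2_h : dft2 h = (M%:R * N%:R * v) *: delta_mx th0 ph0.
  apply/matrixP => th ph; rewrite linear_sum summxE.
  under eq_bigr do rewrite linearZ mxE dft2_cshift2.
  transitivity ((\sum_(a < M) (z1 ^+ th / z1 ^+ th0) ^+ a) *
                (\sum_(b < N) (z2 ^+ ph / z2 ^+ ph0) ^+ b) * dft2 (liftL c) th ph).
    rewrite big_distrlr mulr_suml; under [RHS]eq_bigr do rewrite mulr_suml.
    rewrite pair_big; apply: eq_bigr => -[a b] _ /=.
    rewrite /x0 /y0 !expr_div_n !exprMn; field.
    by rewrite !expf_neq0 ?(prim_root_neq0 z1_prim) ?(prim_root_neq0 z2_prim).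
  rewrite !prim_root_orthogonal // [RHS]mxE [in RHS]mxE.
  have [->|] /= := eqVneq th th0; last by rewrite !mul0r mulr0.
  by have [->|] /= := eqVneq ph ph0; rewrite !(mul1r, mulr1, mul0r, mulr0).
have -> : idft2 (delta_mx th0 ph0) = (M%:R * N%:R * v)^-1 *: h.
  rewrite -[h](dft2K z1_prim z2_prim g1_neq0 g2_neq0) dft2_h linearZ scalerA mulVf ?scale1r //.
  by rewrite !mulf_neq0 ?(prim_root_natf_neq0 z1_prim) ?(prim_root_natf_neq0 z2_prim).
exact: lspanZ.
Qed.

Lemma mem_Etilde (th : 'I_M) (ph : 'I_N) :
  ((th, ph) \in Etilde l1 l2 C g1 g2 z1 z2) = [forall c in C, dft2 (liftL c) th ph == 0].
Proof.
rewrite inE /Vc /= !prim_root_mul_expr // g1M g2N !eqxx /=.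
by apply: eq_forallb => c; rewrite eval2_dft2.
Qed.

Lemma lspan_idft2 (W : 'M[L]_(M, N)) :
  (forall th ph, (th, ph) \in Etilde l1 l2 C g1 g2 z1 z2 -> W th ph = 0) ->
  lspan C (idft2 W).
Proof.
move=> W_Etilde; rewrite [W]matrix_sum_delta linear_sum; apply: lspan_sum => th.
rewrite linear_sum; apply: lspan_sum => ph; rewrite linearZZ.
have [->|W_neq0] := eqVneq (W th ph) 0; first by rewrite scale0r /lspan !linear0 sub0mx.
have : (th, ph) \notin Etilde l1 l2 C g1 g2 z1 z2 by apply: contra W_neq0 => /W_Etilde ->.
rewrite mem_Etilde negb_forall_in => /exists_inP[c cC c_neq0].
exact/lspanZ/(lspan_idft2_delta cC).
Qed.

Variables (s t : nat) (en : 'I_s -> 'I_M * 'I_N) (ep : 'I_t -> 'I_M * 'I_N).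
Hypothesis en_inj : injective en.
Hypothesis en_im : forall tp, tp \notin Etilde l1 l2 C g1 g2 z1 z2 <-> exists k, en k = tp.

Local Notation A := (idft2_submx z1 z2 en ep).

Lemma idft2_submx_dft2 c :
  c \in C -> A *m \col_k dft2 (liftL c) (en k).1 (en k).2 =
              \col_l ((M%:R * g1 ^+ (ep l).1) * (N%:R * g2 ^+ (ep l).2) *
                      liftL c (ep l).1 (ep l).2).
Proof.
move=> cC; apply/colP => l.
rewrite (idft2_submx_mulE z1_prim z2_prim g1_neq0 g2_neq0) scatter_col_en // => [|th ph not_en].
  by rewrite dft2K // [RHS]mxE.
have : (th, ph) \in Etilde l1 l2 C g1 g2 z1 z2.
  by apply: contraT => /en_im[k enk]; move: (not_en k); rewrite enk eqxx.
by rewrite mem_Etilde => /forall_inP/(_ c cC)/eqP.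
Qed.

Hypotheses (C0 : 0 \in C) (C_lin : forall (a : F) x y, x \in C -> y \in C -> a *: x + y \in C).

Lemma idft2_submx_kernel d (E : {set 'I_M * 'I_N}) (X : 'cV[L]_s) :
  (forall c, c \in C -> c != 0 -> (d <= wt c)%N) -> (#|E| < d)%N ->
  (forall ij, ij \notin E -> exists l, ep l = ij) -> A *m X = 0 -> X = 0.
Proof.
move=> C_min E_lt_d ep_onto AX0.
have scale_neq0 (i : 'I_M) (j : 'I_N) : (M%:R * g1 ^+ i) * (N%:R * g2 ^+ j) != 0.
  by rewrite !mulf_neq0 ?expf_neq0 ?(prim_root_natf_neq0 z1_prim) ?(prim_root_natf_neq0 z2_prim).
have u0 : idft2 (scatter en X) = 0.
  apply: (lspan_supp_eq0 C0 C_lin C_min E_lt_d) => [|i j /ep_onto[l epl]].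
    apply: lspan_idft2 => th ph Et; apply: scatter_notin => k.
    by apply: contraTneq Et => <-; apply/en_im; exists k.
  have := idft2_submx_mulE z1_prim z2_prim g1_neq0 g2_neq0 en ep X l.
  by rewrite AX0 mxE epl => /esym/eqP; rewrite mulf_eq0 (negPf (scale_neq0 _ _)) => /eqP.
apply/colP => k; rewrite mxE -(scatter_en _ _ en_inj).
by rewrite -[scatter en X](idft2K z1_prim z2_prim g1_neq0 g2_neq0) u0 linear0 mxE.
Qed.

End CodeSpectrum.

Theorem mainTheorem10 (F : finFieldType) (L : fieldExtType F) (p M N : nat)
  (l1 l2 : F) (gam bet z1 z2 : L) (C : {set 'M[F]_(M, N)}) (d : nat)
  (c e : 'M[F]_(M, N)) (s t' : nat)
  (en : 'I_s -> 'I_M * 'I_N) (ep : 'I_t' -> 'I_M * 'I_N) :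
  prime p -> p \in [pchar F] ->
  (0 < M)%N -> (0 < N)%N -> coprime M p -> coprime N p ->
  l1 != 0 -> l2 != 0 ->
  gam ^+ M = l1%:A -> bet ^+ N = l2%:A ->
  M.-primitive_root z1 -> N.-primitive_root z2 ->
  is_2D_constacyclic l1 l2 C -> is_min_dist C d ->
  c \in C ->
  (1 <= wt e <= (d.-1)./2)%N ->
  (* (theta_k, phi_k) = en k enumerates Omega \ E~ *)
  injective en ->
  (forall tp, tp \notin @Etilde F M N L l1 l2 C gam bet z1 z2 <-> exists k, en k = tp) ->
  (* (i_l, j_l) = ep l enumerates Omega \ E *)
  injective ep ->
  (forall ij, ij \notin supp e <-> exists l, ep l = ij) ->
  let r := c + e in
  let Rs (th : 'I_M) (ph : 'I_N) := eval2 r (gam * z1 ^+ th) (bet * z2 ^+ ph) in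
  let A := \matrix_(l < t', k < s)
             (z1 ^- ((ep l).1 * (en k).1) * z2 ^- ((ep l).2 * (en k).2)) in
  let B := \col_(l < t') \sum_(th < M) \sum_(ph < N)
             Rs th ph * (z1 ^- (ep l).1) ^+ th * (z2 ^- (ep l).2) ^+ ph in
  let Xc := \col_(k < s) eval2 c (gam * z1 ^+ (en k).1) (bet * z2 ^+ (en k).2) in
  A *m Xc = B /\ (forall X : 'cV[L]_s, A *m X = B -> X = Xc).
Proof.
(* The characteristic hypotheses only guarantee that z1 and z2 exist. *)
move=> _ _ M_gt0 N_gt0 _ _ l1_neq0 l2_neq0 gamM betN z1_prim z2_prim
  [C0 C_lin C_col C_row] [_ C_min] cC /andP[wt_gt0 wt_le] en_inj en_im _ ep_im
  r Rs A B Xc.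
have gam_neq0 := alg_expr_neq0 M_gt0 l1_neq0 gamM.
have bet_neq0 := alg_expr_neq0 N_gt0 l2_neq0 betN.
have Xc_dft2 : Xc = \col_k dft2 gam bet z1 z2 (map_mx (in_alg L) c) (en k).1 (en k).2.
  by apply/colP => k; rewrite [LHS]mxE [RHS]mxE eval2_dft2.
have AXc : A *m Xc = B.
  rewrite Xc_dft2 (idft2_submx_dft2 z1_prim z2_prim gam_neq0 bet_neq0 gamM betN ep en_inj en_im cC).
  apply/colP => l.
  rewrite [LHS]mxE [RHS]mxE; under [RHS]eq_bigr do under eq_bigr do rewrite /Rs eval2_dft2.
  rewrite dft2_inversion // !mxE; have : ep l \notin supp e by apply/ep_im; exists l.
  by rewrite inE negbK => /eqP->; rewrite addr0.
split=> // X AX; apply/eqP; rewrite -subr_eq0; apply/eqP.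
have AD0 : A *m (X - Xc) = 0 by rewrite mulmxBr AX AXc subrr.
apply: (idft2_submx_kernel (E := supp e) C_col C_row z1_prim z2_prim gam_neq0 bet_neq0
  gamM betN en_inj en_im C0 C_lin C_min _ _ AD0) => [|ij /ep_im //].
by rewrite -[#|supp e|]/(wt e); lia.
Qed.
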